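(* Bob can win the $2$-Expanded Coloring Game on an uncolored path $P_5$ on five vertices.
   Context: A color is legal for an uncolored vertex $v$ if no neighbor of $v$ has that color. The $k$-coloring game on a (partially colored) graph: Alice and Bob alternate turns, Alice first, each coloring an uncolored vertex with a legal color from a set of $k$ colors; Bob wins if at some point an uncolored vertex has no legal color, Alice wins if all vertices become colored. The $k$-Expanded Coloring Game ($k$-ECG) on a partially colored forest is the same as the $k$-coloring game except that on her turn Alice may choose not to color a vertex, and if she does not color a vertex she may instead add to the forest a single new colored leaf (a new vertex joined to exactly one existing vertex, colored with one of the $k$ colors). *)

From mathcomp Require Import all_boot.
Set Implicit Arguments. Unset Strict Implicit. Unset Printing Implicit Defensive.

(* A partially colored graph: vertices are 0 .. nv-1, an undirected edge list,
   and a partial coloring (None = uncolored; colors are naturals < k). *)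
Record pgraph := PGraph {
  nv : nat;
  edges : seq (nat * nat);
  col : nat -> option nat
}.

Definition adj (G : pgraph) (x y : nat) : bool :=
  ((x, y) \in edges G) || ((y, x) \in edges G).

Definition legal (k : nat) (G : pgraph) (v c : nat) : Prop :=
  c < k /\ forall u, u < nv G -> adj G u v -> col G u <> Some c.

Definition stuck (k : nat) (G : pgraph) : Prop :=
  exists v, [/\ v < nv G, col G v = None & forall c, ~ legal k G v c].

Definition all_colored (G : pgraph) : Prop :=
  forall v, v < nv G -> col G v <> None.

Definition recolor (G : pgraph) (v c : nat) : pgraph :=
  PGraph (nv G) (edges G) (fun x => if x == v then Some c else col G x).

Definition color_move (k : nat) (G G' : pgraph) : Prop :=
  exists v c, [/\ v < nv G, col G v = None, legal k G v c & G' = recolor G v c].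

Definition add_leaf_move (k : nat) (G G' : pgraph) : Prop :=
  exists u c, [/\ u < nv G, c < k, col G u <> Some c &
    G' = PGraph (nv G).+1 ((nv G, u) :: edges G)
                (fun x => if x == nv G then Some c else col G x)].

Definition alice_move (k : nat) (G G' : pgraph) : Prop :=
  [\/ color_move k G G', add_leaf_move k G G' | G' = G].

(* Bob has a winning strategy from G, with Alice (resp. Bob) to move. *)
Inductive bob_wins_A (k : nat) : pgraph -> Prop :=
| BA_stuck G : stuck k G -> bob_wins_A k G
| BA_move G : ~ all_colored G ->
    (forall G', alice_move k G G' -> bob_wins_B k G') -> bob_wins_A k G
with bob_wins_B (k : nat) : pgraph -> Prop :=
| BB_stuck G : stuck k G -> bob_wins_B k G
| BB_move G G' : ~ all_colored G -> color_move k G G' -> bob_wins_A k G' ->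
    bob_wins_B k G.

Definition uncolored_path (n : nat) : pgraph :=
  PGraph n [seq (i, i.+1) | i <- iota 0 n.-1] (fun _ => None).

From mathcomp Require Import all_boot zify.
Set Implicit Arguments. Unset Strict Implicit. Unset Printing Implicit Defensive.

(* Leaves added by Alice are colored on arrival, so they never become moves
   and only matter through the color they forbid at their neighbor.  A
   position of the k-ECG on a core graph with vertices 0 .. n-1 is therefore
   captured by the coloring of the core together with, for each core vertex,
   the colors carried by the added neighbors.  A bounded search over this
   finite abstraction certifies Bob's win; for P_5 and two colors it shows
   that Bob leaves an uncolorable vertex by his second move at the latest. *)

Definition add_leaf (G : pgraph) (u c : nat) : pgraph :=
  PGraph (nv G).+1 ((nv G, u) :: edges G)
         (fun x => if x == nv G then Some c else col G x).

Lemma adj_add_leaf G u c a b :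
  adj (add_leaf G u c) a b =
  [|| (a == nv G) && (b == u), (b == nv G) && (a == u) | adj G a b].
Proof.
rewrite /adj /= !in_cons !xpair_eqE.
by case: (a == nv G) (b == u) (b == nv G) (a == u) => [] [] [] [] /=;
  rewrite ?orbT ?orbF.
Qed.

Lemma adj_uncolored_path n a b :
  adj (uncolored_path n) a b -> a < n /\ b < n.
Proof.
have range x y : (x, y) \in edges (uncolored_path n) -> x < n /\ y < n.
  by case/mapP => i; rewrite mem_iota => /andP[_ lt_i] [-> ->]; lia.
by case/orP => /range [? ?].
Qed.

Lemma all_iotaP (P : pred nat) m : reflect (forall i, i < m -> P i) (all P (iota 0 m)).
Proof.
apply: (iffP allP) => P_iota i; last by rewrite mem_iota => /andP[_]; apply: P_iota.
by move=> lt_im; apply: P_iota; rewrite mem_iota.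
Qed.

Lemma has_iotaP (P : pred nat) m : reflect (exists2 i, i < m & P i) (has P (iota 0 m)).
Proof.
apply: (iffP hasP) => -[i]; last by exists i; rewrite ?mem_iota.
by rewrite mem_iota => /andP[_ lt_im]; exists i.
Qed.

Section Abstraction.

Variables (k n : nat) (e : rel nat).

Record astate := AState {
  acol : nat -> option nat;
  aleaf : nat -> nat -> bool
}.

Definition ablocked s i c :=
  aleaf s i c || has (fun j => e j i && (acol s j == Some c)) (iota 0 n).

Definition alegal s i c := (c < k) && ~~ ablocked s i c.

Definition astuck s :=
  has (fun i => (acol s i == None) && ~~ has (alegal s i) (iota 0 k)) (iota 0 n).

Definition acomplete s := all (fun i => acol s i != None) (iota 0 n).

Definition acolor s i c :=
  AState (fun x => if x == i then Some c else acol s x) (aleaf s).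

Definition aadd_leaf s i c :=
  AState (acol s) (fun x d => ((x == i) && (d == c)) || aleaf s x d).

Definition bob_reply (win : astate -> bool) t :=
  astuck t || has (fun i => has (fun c =>
    [&& acol t i == None, alegal t i c & win (acolor t i c)]) (iota 0 k)) (iota 0 n).

(* Leaves attached outside the core leave the abstraction unchanged, so
   Alice's pass and those moves are both covered by [reply s].  Leaves are
   tried in every color, even that of their neighbor, which only gives Alice
   more options. *)
Fixpoint bob_search d s :=
  astuck s ||
  if d is d'.+1 then
    let reply := bob_reply (bob_search d') in
    [&& ~~ acomplete s, reply s,
        all (fun i => all (fun c =>
          (acol s i == None) && alegal s i c ==> reply (acolor s i c))
          (iota 0 k)) (iota 0 n) &
        all (fun i => all (fun c => reply (aadd_leaf s i c))
          (iota 0 k)) (iota 0 n)]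
  else false.

Record represents (G : pgraph) (s : astate) : Prop := Represents {
  core_in_graph : n <= nv G;
  col_core : forall x, x < n -> col G x = acol s x;
  col_extra : forall x, n <= x < nv G -> col G x <> None;
  adj_in_graph : forall a b, adj G a b -> a < nv G /\ b < nv G;
  adj_core : forall i j, i < n -> j < n -> adj G i j = e i j;
  aleafP : forall i c, i < n ->
    aleaf s i c <-> exists2 w, n <= w < nv G & adj G w i /\ col G w = Some c
}.

Section Represents.

Variables (G : pgraph) (s : astate).
Hypothesis G_s : represents G s.

Lemma core_vertex i : i < n -> i < nv G.
Proof. by move=> lt_in; apply: leq_trans lt_in (core_in_graph G_s). Qed.

Lemma ablockedP i c : i < n ->
  reflect (exists u, [/\ u < nv G, adj G u i & col G u = Some c])
          (ablocked s i c).
Proof.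
move=> lt_in; apply: (iffP idP).
- case/orP => [/(aleafP G_s c lt_in) [w /andP[_ lt_w] [adj_w col_w]] | ].
    by exists w.
  case/hasP => j; rewrite mem_iota => /andP[_ lt_jn] /andP[e_ji /eqP col_j].
  exists j; split; first exact: core_vertex.
    by rewrite (adj_core G_s).
  by rewrite (col_core G_s).
- move=> [u [lt_u adj_u col_u]]; apply/orP; case: (ltnP u n) => [lt_un | le_nu].
    right; apply/hasP; exists u; first by rewrite mem_iota.
    by rewrite -(adj_core G_s) // adj_u -(col_core G_s) // col_u /=.
  by left; apply/(aleafP G_s c lt_in); exists u; rewrite ?le_nu.
Qed.

Lemma alegalP i c : i < n -> reflect (legal k G i c) (alegal s i c).
Proof.
move=> lt_in; apply: (iffP andP) => [[lt_ck not_blocked] | [lt_ck free]].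
  split => // u lt_u adj_u col_u; move/(ablockedP c lt_in): not_blocked.
  by apply; exists u.
split => //; apply/(ablockedP c lt_in) => -[u [lt_u adj_u col_u]].
exact: free u lt_u adj_u col_u.
Qed.

Lemma astuck_stuck : astuck s -> stuck k G.
Proof.
case/hasP => i; rewrite mem_iota => /andP[_ lt_in] /andP[/eqP col_i no_color].
exists i; split; first exact: core_vertex.
  by rewrite (col_core G_s).
move=> c /(alegalP c lt_in) legal_c; case/andP: (legal_c) => lt_ck _.
by case/hasP: no_color; exists c; rewrite ?mem_iota.
Qed.

Lemma not_acomplete : ~~ acomplete s -> ~ all_colored G.
Proof.
case/allPn => i; rewrite mem_iota negbK => /andP[_ lt_in] /eqP col_i colored.
by apply: (colored i (core_vertex lt_in)); rewrite (col_core G_s).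
Qed.

Lemma represents_recolor i c : i < n -> represents (recolor G i c) (acolor s i c).
Proof.
move=> lt_in.
have col_off w : n <= w -> col (recolor G i c) w = col G w.
  by move=> le_nw /=; case: eqP => // eq_wi; lia.
split.
- exact: core_in_graph G_s.
- by move=> x lt_xn /=; rewrite (col_core G_s).
- by move=> x /andP[le_nx lt_x]; rewrite col_off //; apply: (col_extra G_s);
    rewrite le_nx.
- exact: adj_in_graph G_s.
- exact: adj_core G_s.
- move=> j d lt_jn; rewrite (aleafP G_s d lt_jn).
  by split=> -[w /[dup] /andP[le_nw _] w_in]; rewrite ?col_off //;
    exists w => //; rewrite ?col_off.
Qed.

Lemma represents_add_leaf u c : u < nv G ->
  represents (add_leaf G u c) (if u < n then aadd_leaf s u c else s).
Proof.
move=> lt_u.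
have core_old x : x < n -> (x == nv G) = false.
  by move=> lt_xn; apply/eqP; move: (core_in_graph G_s); lia.
have aleaf_new i d : aleaf (if u < n then aadd_leaf s u c else s) i d =
    ((i == u) && (d == c) && (u < n)) || aleaf s i d.
  by case: (u < n); rewrite ?andbT ?andbF.
split.
- exact: leqW (core_in_graph G_s).
- by move=> x lt_xn /=; rewrite core_old // (col_core G_s); case: (u < n).
- move=> x /andP[le_nx]; rewrite ltnS leq_eqVlt /= => /orP[-> // | lt_x].
  by rewrite ltn_eqF //; apply: (col_extra G_s); rewrite le_nx.
- move=> a b; rewrite adj_add_leaf => /or3P[|| /(adj_in_graph G_s) []].
  + by case/andP => /eqP -> /eqP ->/=; lia.
  + by case/andP => /eqP -> /eqP ->/=; lia.
  + by move=> ? ? /=; lia.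
- by move=> i j lt_in lt_jn; rewrite adj_add_leaf !core_old // (adj_core G_s).
- move=> i d lt_in; rewrite aleaf_new; split.
  + case/orP => [/andP[/andP[/eqP -> /eqP ->] lt_un] | /(aleafP G_s d lt_in)].
      exists (nv G); first by rewrite (core_in_graph G_s) ltnSn.
      by rewrite adj_add_leaf /= !eqxx.
    case=> w /andP[le_nw lt_w] [adj_w col_w]; exists w; first by rewrite le_nw ltnW.
    by rewrite adj_add_leaf /= ltn_eqF // core_old // col_w.
  + case=> w /andP[le_nw]; rewrite ltnS leq_eqVlt adj_add_leaf /=.
    case/orP => [/eqP -> | lt_w].
      rewrite eqxx core_old //= => -[/orP[/eqP eq_iu | adj_new] [->]].
        by rewrite -eq_iu !eqxx lt_in.
      by have := (adj_in_graph G_s adj_new).1; rewrite ltnn.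
    rewrite ltn_eqF // core_old //= => -[adj_w col_w].
    by apply/orP; right; apply/(aleafP G_s d lt_in); exists w; rewrite ?le_nw.
Qed.

Lemma color_move_core G' : color_move k G G' ->
  exists i c, [/\ i < n, acol s i = None, alegal s i c & G' = recolor G i c].
Proof.
move=> [v [c [lt_v col_v legal_c ->]]].
have lt_vn : v < n.
  by case: ltnP => // le_nv; case: (col_extra G_s _ col_v); rewrite le_nv.
by exists v, c; rewrite -(col_core G_s) //; split => //; apply/(alegalP c lt_vn).
Qed.

Lemma acolor_color_move i c : i < n -> acol s i = None -> alegal s i c ->
  color_move k G (recolor G i c).
Proof.
move=> lt_in col_i legal_c; exists i, c; split => //; first exact: core_vertex.
  by rewrite (col_core G_s).
exact/(alegalP c lt_in).
Qed.

End Represents.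

Lemma bob_reply_sound (win : astate -> bool) G t :
  (forall G' t', represents G' t' -> win t' -> bob_wins_A k G') ->
  represents G t -> bob_reply win t -> bob_wins_B k G.
Proof.
move=> win_sound G_t /orP[/(astuck_stuck G_t) /BB_stuck // | ].
case/has_iotaP => i lt_in /has_iotaP[c _ /and3P[/eqP col_i legal_c win_c]].
apply: (@BB_move _ _ (recolor G i c)).
- by apply: (not_acomplete G_t); apply/allPn; exists i; rewrite ?mem_iota ?col_i.
- exact: (acolor_color_move G_t lt_in col_i legal_c).
- exact: win_sound (represents_recolor G_t c lt_in) win_c.
Qed.

Lemma bob_search_sound d G s : represents G s -> bob_search d s -> bob_wins_A k G.
Proof.
elim: d G s => [|d IH] G s G_s /orP[/(astuck_stuck G_s) /BA_stuck // | ] //.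
case/and4P => incomplete reply_pass /all_iotaP reply_color /all_iotaP reply_leaf.
have reply_sound := bob_reply_sound IH.
apply: BA_move => [|G' [color | leaf | ->]]; first exact: not_acomplete G_s incomplete.
- have [i [c [lt_in col_i legal_c ->]]] := color_move_core G_s color.
  apply: reply_sound (represents_recolor G_s c lt_in) _.
  case/andP: (legal_c) => lt_ck _.
  by move/all_iotaP: (reply_color i lt_in) => /(_ c lt_ck); rewrite col_i legal_c.
- move: leaf => [u [c [lt_u lt_ck _ ->]]].
  apply: reply_sound (represents_add_leaf G_s c lt_u) _.
  by case: ltnP => // lt_un; move/all_iotaP: (reply_leaf u lt_un); apply.
- exact: reply_sound G_s reply_pass.
Qed.

End Abstraction.

Lemma represents_self B : (forall a b, adj B a b -> a < nv B /\ b < nv B) ->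
  represents (nv B) (adj B) B (AState (col B) (fun _ _ => false)).
Proof.
move=> adj_B; split => // [x /andP[le_x lt_x] | i c _].
  by move: (leq_ltn_trans le_x lt_x); rewrite ltnn.
by split => // -[w /andP[le_w lt_w]]; move: (leq_ltn_trans le_w lt_w); rewrite ltnn.
Qed.

Theorem lemma4p1 : bob_wins_A 2 (uncolored_path 5).
Proof.
apply: (bob_search_sound (k := 2) (d := 2)
          (represents_self (@adj_uncolored_path 5))).
by vm_compute.
Qed.
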